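(* Let $(G,k)$ be an instance of \textsc{Bicolored $P_3$ Deletion} such that $G$ is nice, and let $p$ be the number of bicolored $P_3$s in $G$. Then for every two edges $e_1,e_2$ forming a bicolored $P_3$ in $G$ there is an edge $e\in\{e_1,e_2\}$ such that (a) $G-e$ contains exactly $p-1$ bicolored $P_3$s, and (b) $G-e$ is nice.
   Context: A two-colored graph $G=(V,E_r,E_b)$ is a finite simple undirected graph whose edge set $E=E_r\uplus E_b$ is partitioned into red and blue edges. A bicolored $P_3$ is an induced subgraph on three vertices $u,v,w$ with edges $\{u,v\},\{v,w\}$ of different colors and $\{u,w\}\notin E$; these two edges form the bicolored $P_3$. The following induced subgraphs are defined up to swapping the two colors (both versions count). An LC-Diamond on $u,v,w,z$: edges exactly $\{u,v\}$ blue, $\{v,w\}$ red, $\{u,z\}$ blue, $\{v,z\}$ red, $\{w,z\}$ blue. An LO-Diamond on $u,v,w,z$: edges exactly $\{u,v\}$ blue, $\{v,w\}$ red, $\{u,z\}$ blue, $\{v,z\}$ blue, $\{w,z\}$ red. An IIZ-Diamond on $u,v,w,z$: edges exactly $\{u,v\}$ blue, $\{v,w\}$ red, $\{u,z\}$ red, $\{v,z\}$ blue, $\{w,z\}$ blue. A CC-Hourglass on $u,v,w,z_1,z_2$: edges exactly $\{u,v\}$ blue, $\{v,w\}$ red, $\{u,z_1\}$ blue, $\{v,z_1\}$ red, $\{v,z_2\}$ blue, $\{w,z_2\}$ red. A two-colored graph is nice if it contains none of LC-Diamond, LO-Diamond, IIZ-Diamond, CC-Hourglass as an induced subgraph and every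 edge forms a bicolored $P_3$ with at most one other edge. \textsc{Bicolored $P_3$ Deletion}: given $G$ and $k\in\mathbb{N}$, decide whether some $S\subseteq E$ with $|S|\le k$ makes $G-S$ free of induced bicolored $P_3$s. *)

From mathcomp Require Import all_boot.
Set Implicit Arguments. Unset Strict Implicit. Unset Printing Implicit Defensive.

(* A two-colored graph on a finite vertex type V is given by a colouring
   function col : V -> V -> option bool:  col x y = None  means {x,y} is not
   an edge; Some true = red edge, Some false = blue edge. *)
Definition tcg (V : finType) (col : V -> V -> option bool) : Prop :=
  (forall x y, col x y = col y x) /\ (forall x, col x x = None).

Section TwoColored.
Variable V : finType.
Variable col : V -> V -> option bool.

Definition is_edge (e : {set V}) : bool :=
  [exists x, exists y, (e == [set x; y]) && (col x y != None)].

Definition bp3 (e1 e2 : {set V}) : bool :=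
  [exists u, exists v, exists w, exists c : bool,
     [&& e1 == [set u; v], e2 == [set v; w], u != w,
         col u v == Some c, col v w == Some (~~ c) & col u w == None]].

Definition nbp3 : nat :=
  #|[set E : {set {set V}} | [exists e1, exists e2, (E == [set e1; e2]) && bp3 e1 e2]]|.

(* Forbidden induced subgraphs; c plays the role of "blue" (so ~~ c is "red"),
   quantifying over c covers both colour versions. *)
Definition has_LC_diamond : bool :=
  [exists u, exists v, exists w, exists z, exists c : bool,
     [&& uniq [:: u; v; w; z],
         col u v == Some c, col v w == Some (~~ c), col u z == Some c,
         col v z == Some (~~ c), col w z == Some c & col u w == None]].

Definition has_LO_diamond : bool :=
  [exists u, exists v, exists w, exists z, exists c : bool,
     [&& uniq [:: u; v; w; z],
         col u v == Some c, col v w == Some (~~ c), col u z == Some c,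
         col v z == Some c, col w z == Some (~~ c) & col u w == None]].

Definition has_IIZ_diamond : bool :=
  [exists u, exists v, exists w, exists z, exists c : bool,
     [&& uniq [:: u; v; w; z],
         col u v == Some c, col v w == Some (~~ c), col u z == Some (~~ c),
         col v z == Some c, col w z == Some c & col u w == None]].

Definition has_CC_hourglass : bool :=
  [exists u, exists v, exists w, exists z1, exists z2, exists c : bool,
     [&& uniq [:: u; v; w; z1; z2],
         col u v == Some c, col v w == Some (~~ c), col u z1 == Some c,
         col v z1 == Some (~~ c), col v z2 == Some c, col w z2 == Some (~~ c),
         col u w == None, col u z2 == None, col w z1 == None
       & col z1 z2 == None]].

Definition nice : Prop :=
  ~~ has_LC_diamond /\ ~~ has_LO_diamond /\ ~~ has_IIZ_diamond /\
  ~~ has_CC_hourglass /\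
  (forall e, is_edge e -> #|[set e' | bp3 e e' || bp3 e' e]| <= 1).

End TwoColored.

Definition del_edge (V : finType) (col : V -> V -> option bool) (e : {set V})
  : V -> V -> option bool :=
  fun x y => if [set x; y] == e then None else col x y.

From mathcomp Require Import all_boot.
From Stdlib Require Import Classical.
Set Implicit Arguments. Unset Strict Implicit. Unset Printing Implicit Defensive.

(* Call an edge {a,b} safe if no vertex z is joined to a and to b by edges of
   different colours.  Deleting a safe edge creates no bicolored P3, so every
   bicolored P3 of G - e is one of G; hence G - e is again nice (the non-edges
   of a CC-hourglass that are not bases of bicolored paths are forced by
   LO- and IIZ-freeness), and since e lies in exactly one bicolored P3 the
   count drops by one.  Of the two edges {u,v}, {v,w} of a bicolored P3 one is
   safe: the forbidden diamonds and the degree condition fix the colours at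
   witnesses x for {u,v} and y for {v,w}, and then x, y complete an LC-diamond
   or a CC-hourglass. *)

Lemma eq_set2 (T : finType) (x y u v : T) :
  [set x; y] = [set u; v] -> (x = u /\ y = v) \/ (x = v /\ y = u).
Proof.
move=> Exy.
have hx : x \in [set u; v] by rewrite -Exy !inE eqxx.
have hy : y \in [set u; v] by rewrite -Exy !inE eqxx orbT.
have hu : u \in [set x; y] by rewrite Exy !inE eqxx.
have hv : v \in [set x; y] by rewrite Exy !inE eqxx orbT.
move: hx hy hu hv; rewrite !inE.
by do 4!case/orP=> /eqP ?; subst; auto.
Qed.

Lemma eq_or_negb (b c : bool) : b = c \/ b = ~~ c.
Proof. by case: b; case: c; auto. Qed.

Definition bp3_pairs (V : finType) (col : V -> V -> option bool) :=
  [set E : {set {set V}} | [exists e1, exists e2, (E == [set e1; e2]) && bp3 col e1 e2]].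

Lemma nbp3E (V : finType) (col : V -> V -> option bool) :
  nbp3 col = #|bp3_pairs col|.
Proof. by []. Qed.

Lemma del_edge_Some (V : finType) (col : V -> V -> option bool) e x y d :
  del_edge col e x y = Some d -> col x y = Some d.
Proof. by rewrite /del_edge; case: ifP. Qed.

Section TwoColouredGraph.

Variables (V : finType) (col : V -> V -> option bool).
Hypothesis col_sym : forall x y, col x y = col y x.
Hypothesis col_loopfree : forall x, col x x = None.

Ltac colour_fact := rewrite ?negbK; first [assumption | rewrite col_sym; assumption].

Lemma col_neq x y d : col x y = Some d -> x != y.
Proof. by move=> Hxy; apply/eqP=> Exy; rewrite Exy col_loopfree in Hxy. Qed.

Lemma col_bicolored_neq u v w c :
  col u v = Some c -> col v w = Some (~~ c) -> u != w.
Proof. by move=> Huv Hvw; apply/eqP=> Euw; rewrite -Euw col_sym Huv in Hvw; case: c {Huv} Hvw. Qed.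

Lemma col_None_neq x y y' d : col x y = Some d -> col x y' = None -> y != y'.
Proof. by move=> Hxy Hxy'; apply/eqP=> Ey; rewrite Ey Hxy' in Hxy. Qed.

Lemma is_edgeI x y d : col x y = Some d -> is_edge col [set x; y].
Proof. by move=> Hxy; apply/existsP; exists x; apply/existsP; exists y; rewrite eqxx Hxy. Qed.

Lemma bp3I u v w c :
  col u v = Some c -> col v w = Some (~~ c) -> col u w = None ->
  bp3 col [set u; v] [set v; w].
Proof.
move=> Huv Hvw Huw.
apply/existsP; exists u; apply/existsP; exists v; apply/existsP; exists w.
by apply/existsP; exists c; rewrite (col_bicolored_neq Huv Hvw) Huv Hvw Huw !eqxx.
Qed.

Lemma bp3_edges f g : bp3 col f g -> is_edge col f /\ is_edge col g.
Proof.
case/existsP=> u /existsP[v /existsP[w /existsP[c]]].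
case/and5P=> /eqP-> /eqP-> _ /eqP Huv /andP[/eqP Hvw _].
by split; [exact: is_edgeI Huv | exact: is_edgeI Hvw].
Qed.

Lemma uniq_diamond u v w z c d1 d2 d3 :
  col u v = Some c -> col v w = Some (~~ c) -> col u z = Some d1 ->
  col v z = Some d2 -> col w z = Some d3 -> uniq [:: u; v; w; z].
Proof.
move=> Huv Hvw Huz Hvz Hwz.
by rewrite /= !inE !negb_or (col_neq Huv) (col_bicolored_neq Huv Hvw)
  (col_neq Huz) (col_neq Hvw) (col_neq Hvz) (col_neq Hwz).
Qed.

Lemma LC_diamondI u v w z c :
  col u v = Some c -> col v w = Some (~~ c) -> col u z = Some c ->
  col v z = Some (~~ c) -> col w z = Some c -> col u w = None ->
  has_LC_diamond col.
Proof.
move=> Huv Hvw Huz Hvz Hwz Huw.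
apply/existsP; exists u; apply/existsP; exists v; apply/existsP; exists w.
apply/existsP; exists z; apply/existsP; exists c.
by rewrite (uniq_diamond Huv Hvw Huz Hvz Hwz) Huv Hvw Huz Hvz Hwz Huw !eqxx.
Qed.

Lemma LO_diamondI u v w z c :
  col u v = Some c -> col v w = Some (~~ c) -> col u z = Some c ->
  col v z = Some c -> col w z = Some (~~ c) -> col u w = None ->
  has_LO_diamond col.
Proof.
move=> Huv Hvw Huz Hvz Hwz Huw.
apply/existsP; exists u; apply/existsP; exists v; apply/existsP; exists w.
apply/existsP; exists z; apply/existsP; exists c.
by rewrite (uniq_diamond Huv Hvw Huz Hvz Hwz) Huv Hvw Huz Hvz Hwz Huw !eqxx.
Qed.

Lemma IIZ_diamondI u v w z c :
  col u v = Some c -> col v w = Some (~~ c) -> col u z = Some (~~ c) ->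
  col v z = Some c -> col w z = Some c -> col u w = None ->
  has_IIZ_diamond col.
Proof.
move=> Huv Hvw Huz Hvz Hwz Huw.
apply/existsP; exists u; apply/existsP; exists v; apply/existsP; exists w.
apply/existsP; exists z; apply/existsP; exists c.
by rewrite (uniq_diamond Huv Hvw Huz Hvz Hwz) Huv Hvw Huz Hvz Hwz Huw !eqxx.
Qed.

Lemma CC_hourglassI u v w z1 z2 c :
  col u v = Some c -> col v w = Some (~~ c) -> col u z1 = Some c ->
  col v z1 = Some (~~ c) -> col v z2 = Some c -> col w z2 = Some (~~ c) ->
  col u w = None -> col u z2 = None -> col w z1 = None -> col z1 z2 = None ->
  has_CC_hourglass col.
Proof.
move=> Huv Hvw Huz1 Hvz1 Hvz2 Hwz2 Huw Huz2 Hwz1 Hz1z2.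
have Hwu : col w u = None by rewrite col_sym.
have uz2 : u != z2 by rewrite eq_sym (col_None_neq Hwz2 Hwu).
have wz1 : w != z1 by rewrite eq_sym (col_None_neq Huz1 Huw).
have uniq_uvwz1z2 : uniq [:: u; v; w; z1; z2].
  by rewrite /= !inE !negb_or (col_neq Huv) (col_bicolored_neq Huv Hvw)
    (col_neq Huz1) uz2 (col_neq Hvw) (col_neq Hvz1) (col_neq Hvz2) wz1
    (col_neq Hwz2) (col_None_neq Huz1 Huz2).
apply/existsP; exists u; apply/existsP; exists v; apply/existsP; exists w.
apply/existsP; exists z1; apply/existsP; exists z2; apply/existsP; exists c.
by rewrite uniq_uvwz1z2 Huv Hvw Huz1 Hvz1 Hvz2 Hwz2 Huw Huz2 Hwz1 Hz1z2 !eqxx.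
Qed.

Definition safe_edge (a b : V) :=
  forall z d, col a z = Some d -> col z b = Some (~~ d) -> False.

Definition p3_partner (e f : {set V}) := bp3 col e f || bp3 col f e.

Section Subgraph.

Variable col' : V -> V -> option bool.
Hypothesis sub_col : forall x y d, col' x y = Some d -> col x y = Some d.
Hypothesis bicolored_base_sub : forall x y z d,
  col x z = Some d -> col z y = Some (~~ d) -> col' x y = None -> col x y = None.

Lemma is_edge_sub f : is_edge col' f -> is_edge col f.
Proof.
case/existsP=> x /existsP[y /andP[/eqP-> Hxy]].
by case Exy: (col' x y) Hxy => [d|] // _; exact: is_edgeI (sub_col Exy).
Qed.

Lemma bp3_sub f g : bp3 col' f g -> bp3 col f g.
Proof.
case/existsP=> u /existsP[v /existsP[w /existsP[c]]].
case/and5P=> /eqP-> /eqP-> _ /eqP/sub_col Huv /andP[/eqP/sub_col Hvw /eqP Huw].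
exact: bp3I Huv Hvw (bicolored_base_sub Huv Hvw Huw).
Qed.

Lemma LC_diamond_sub : has_LC_diamond col' -> has_LC_diamond col.
Proof.
case/existsP=> u /existsP[v /existsP[w /existsP[z /existsP[c]]]].
case/and5P=> _ /eqP/sub_col Huv /eqP/sub_col Hvw /eqP/sub_col Huz.
case/and3P=> /eqP/sub_col Hvz /eqP/sub_col Hwz /eqP Huw.
exact: LC_diamondI Huv Hvw Huz Hvz Hwz (bicolored_base_sub Huv Hvw Huw).
Qed.

Lemma LO_diamond_sub : has_LO_diamond col' -> has_LO_diamond col.
Proof.
case/existsP=> u /existsP[v /existsP[w /existsP[z /existsP[c]]]].
case/and5P=> _ /eqP/sub_col Huv /eqP/sub_col Hvw /eqP/sub_col Huz.
case/and3P=> /eqP/sub_col Hvz /eqP/sub_col Hwz /eqP Huw.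
exact: LO_diamondI Huv Hvw Huz Hvz Hwz (bicolored_base_sub Huv Hvw Huw).
Qed.

Lemma IIZ_diamond_sub : has_IIZ_diamond col' -> has_IIZ_diamond col.
Proof.
case/existsP=> u /existsP[v /existsP[w /existsP[z /existsP[c]]]].
case/and5P=> _ /eqP/sub_col Huv /eqP/sub_col Hvw /eqP/sub_col Huz.
case/and3P=> /eqP/sub_col Hvz /eqP/sub_col Hwz /eqP Huw.
exact: IIZ_diamondI Huv Hvw Huz Hvz Hwz (bicolored_base_sub Huv Hvw Huw).
Qed.

Lemma CC_hourglass_sub :
  ~~ has_LO_diamond col -> ~~ has_IIZ_diamond col ->
  has_CC_hourglass col' -> has_CC_hourglass col.
Proof.
move=> noLO noIIZ.
case/existsP=> u /existsP[v /existsP[w /existsP[z1 /existsP[z2 /existsP[c]]]]].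
case/and5P=> _ /eqP/sub_col Huv /eqP/sub_col Hvw /eqP/sub_col Huz1.
case/and5P=> /eqP/sub_col Hvz1 /eqP/sub_col Hvz2 /eqP/sub_col Hwz2 /eqP Huw.
case/and3P=> _ _ /eqP Hz1z2.
have {}Huw := bicolored_base_sub Huv Hvw Huw.
have {}Hz1z2 : col z1 z2 = None.
  by apply: (bicolored_base_sub (z := v) (d := ~~ c)) Hz1z2; colour_fact.
have Huz2 : col u z2 = None.
  case Huz2: (col u z2) => [e|] //; exfalso.
  have [Ee|Ee] := eq_or_negb e c; rewrite {e}Ee in Huz2.
  - by case/negP: noLO; apply: (@LO_diamondI u v w z2 c); colour_fact.
  - by case/negP: noIIZ; apply: (@IIZ_diamondI z2 v z1 u c); colour_fact.
have Hwz1 : col w z1 = None.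
  case Hwz1: (col w z1) => [e|] //; exfalso.
  have [Ee|Ee] := eq_or_negb e c; rewrite {e}Ee in Hwz1.
  - by case/negP: noIIZ; apply: (@IIZ_diamondI z1 v z2 w (~~ c)); colour_fact.
  - by case/negP: noLO; apply: (@LO_diamondI w v u z1 (~~ c)); colour_fact.
exact: CC_hourglassI Huv Hvw Huz1 Hvz1 Hvz2 Hwz2 Huw Huz2 Hwz1 Hz1z2.
Qed.

Lemma nice_sub : nice col -> nice col'.
Proof.
case=> noLC [noLO [noIIZ [noCC p3_deg]]].
split; first exact: contra LC_diamond_sub noLC.
split; first exact: contra LO_diamond_sub noLO.
split; first exact: contra IIZ_diamond_sub noIIZ.
split; first exact: contra (CC_hourglass_sub noLO noIIZ) noCC.
move=> f /is_edge_sub /p3_deg; apply: leq_trans; apply: subset_leq_card.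
by apply/subsetP=> g; rewrite !inE => /orP[] /bp3_sub ->; rewrite ?orbT.
Qed.

End Subgraph.

Section EdgeDeletion.

Variables a b : V.
Hypothesis ab_safe : safe_edge a b.

Lemma del_safe_edge_bicolored_base x y z d :
  col x z = Some d -> col z y = Some (~~ d) ->
  del_edge col [set a; b] x y = None -> col x y = None.
Proof.
rewrite /del_edge; case: ifP => // /eqP/eq_set2[[-> ->]|[-> ->]] Hxz Hzy _; exfalso.
  exact: ab_safe Hxz Hzy.
by apply: (ab_safe (z := z) (d := ~~ d)); colour_fact.
Qed.

Lemma nice_del_safe_edge : nice col -> nice (del_edge col [set a; b]).
Proof. exact: nice_sub (@del_edge_Some _ _ _) del_safe_edge_bicolored_base. Qed.

Lemma bp3_del_safe_edge f g :
  bp3 (del_edge col [set a; b]) f g =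
  [&& bp3 col f g, f != [set a; b] & g != [set a; b]].
Proof.
apply/idP/and3P.
  move=> p3_fg; split.
  - exact: bp3_sub (@del_edge_Some _ _ _) del_safe_edge_bicolored_base _ _ p3_fg.
  - case/existsP: p3_fg => u /existsP[v /existsP[w /existsP[c]]].
    case/and5P=> /eqP-> _ _ Huv _; apply: contraTneq Huv => <-.
    by rewrite /del_edge eqxx.
  - case/existsP: p3_fg => u /existsP[v /existsP[w /existsP[c]]].
    case/and5P=> _ /eqP-> _ _ /andP[Hvw _]; apply: contraTneq Hvw => <-.
    by rewrite /del_edge eqxx.
case=> /existsP[u /existsP[v /existsP[w /existsP[c /and5P[/eqP Ef /eqP Eg uw
  /eqP Huv /andP[/eqP Hvw /eqP Huw]]]]]] f_ne g_ne.
apply/existsP; exists u; apply/existsP; exists v; apply/existsP; exists w.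
apply/existsP; exists c; rewrite Ef Eg uw !eqxx /del_edge -Ef -Eg.
by rewrite (negbTE f_ne) (negbTE g_ne) Huv Hvw Huw if_same !eqxx.
Qed.

End EdgeDeletion.

Section NiceGraph.

Hypothesis noLC : ~~ has_LC_diamond col.
Hypothesis noLO : ~~ has_LO_diamond col.
Hypothesis noIIZ : ~~ has_IIZ_diamond col.
Hypothesis noCC : ~~ has_CC_hourglass col.
Hypothesis p3_deg : forall e, is_edge col e -> #|[set f | p3_partner e f]| <= 1.

Lemma p3_partner_unique e f f' :
  is_edge col e -> p3_partner e f -> p3_partner e f' -> f = f'.
Proof.
by move=> /p3_deg /card_le1_eqP partner_eq f_p f'_p; apply: partner_eq; rewrite inE.
Qed.

Lemma bp3_pair_partner f g e :
  bp3 col f g -> e \in [set f; g] ->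
  is_edge col e /\ exists2 h, p3_partner e h & [set f; g] = [set e; h].
Proof.
move=> p3_fg; have [f_edge g_edge] := bp3_edges p3_fg.
rewrite !inE => /orP[]/eqP->; split=> //.
  by exists g; rewrite // /p3_partner p3_fg.
by exists f; rewrite /p3_partner ?p3_fg ?orbT // setUC.
Qed.

Lemma bp3_through_edge_unique f g f' g' e :
  bp3 col f g -> bp3 col f' g' -> e \in [set f; g] -> e \in [set f'; g'] ->
  [set f; g] = [set f'; g'].
Proof.
move=> p3_fg p3_fg' e_fg e_fg'.
have [e_edge [h partner_h ->]] := bp3_pair_partner p3_fg e_fg.
have [_ [h' partner_h' ->]] := bp3_pair_partner p3_fg' e_fg'.
by rewrite (p3_partner_unique e_edge partner_h partner_h').
Qed.

Lemma bp3_pairs_del_safe_edge e1 e2 a b :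
  safe_edge a b -> bp3 col e1 e2 -> [set a; b] \in [set e1; e2] ->
  bp3_pairs (del_edge col [set a; b]) = bp3_pairs col :\ [set e1; e2].
Proof.
move=> ab_safe p3_12 e_in; apply/setP=> E; rewrite !inE.
apply/existsP/andP=> [[f /existsP[g /andP[/eqP-> p3_fg]]]|].
  move: p3_fg; rewrite (bp3_del_safe_edge ab_safe) => /and3P[p3_fg f_ne g_ne].
  split; last by apply/existsP; exists f; apply/existsP; exists g; rewrite eqxx.
  apply/eqP=> E_fg; move: e_in; rewrite -E_fg !inE.
  by case/orP=> /eqP e_eq; [move: f_ne | move: g_ne]; rewrite e_eq eqxx.
case=> E_ne /existsP[f /existsP[g /andP[/eqP E_fg p3_fg]]].
exists f; apply/existsP; exists g; rewrite E_fg eqxx (bp3_del_safe_edge ab_safe) p3_fg /=.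
apply/andP; split; apply: contraNneq E_ne => e_eq; rewrite E_fg;
  apply/eqP/(bp3_through_edge_unique p3_fg p3_12 _ e_in); by rewrite !inE e_eq eqxx ?orbT.
Qed.

Lemma nbp3_del_safe_edge e1 e2 a b :
  safe_edge a b -> bp3 col e1 e2 -> [set a; b] \in [set e1; e2] ->
  nbp3 (del_edge col [set a; b]) = nbp3 col - 1.
Proof.
move=> ab_safe p3_12 e_in.
have p3_12_in : [set e1; e2] \in bp3_pairs col.
  by rewrite inE; apply/existsP; exists e1; apply/existsP; exists e2; rewrite eqxx p3_12.
rewrite !nbp3E (bp3_pairs_del_safe_edge ab_safe p3_12 e_in).
by rewrite (cardsD1 [set e1; e2] (bp3_pairs col)) p3_12_in add1n subn1.
Qed.

Lemma unsafe_witness_first_edge u v w c x d :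
  col u v = Some c -> col v w = Some (~~ c) -> col u w = None ->
  col u x = Some d -> col x v = Some (~~ d) -> d = c /\ col x w = None.
Proof.
move=> Huv Hvw Huw Hux Hxv.
have Hxw : col x w = None.
  case Hxw: (col x w) => [e|] //; exfalso.
  move: Hux Hxv Hxw.
  have [->|->] := eq_or_negb d c; have [->|->] := eq_or_negb e c;
    rewrite ?negbK => Hux Hxv Hxw.
  - by case/negP: noLC; apply: (@LC_diamondI u v w x c); colour_fact.
  - by case/negP: noLO; apply: (@LO_diamondI w v u x (~~ c)); colour_fact.
  - by case/negP: noIIZ; apply: (@IIZ_diamondI u v w x c); colour_fact.
  - by case/negP: noLC; apply: (@LC_diamondI w v u x (~~ c)); colour_fact.
split=> //; have [//|Ed] := eq_or_negb d c; exfalso.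
rewrite {d}Ed negbK in Hux Hxv.
(* otherwise x-v-w would be a second bicolored P3 through {v,w} *)
have partner_xv : p3_partner [set v; w] [set x; v].
  by rewrite /p3_partner (bp3I Hxv Hvw Hxw) orbT.
have partner_uv : p3_partner [set v; w] [set u; v].
  by rewrite /p3_partner (bp3I Huv Hvw Huw) orbT.
case: (eq_set2 (p3_partner_unique (is_edgeI Hvw) partner_xv partner_uv)) => [[Exu _]|[Exv _]].
  by rewrite Exu col_loopfree in Hux.
by rewrite Exv col_loopfree in Hxv.
Qed.

Lemma safe_edge_of_bp3 u v w c :
  col u v = Some c -> col v w = Some (~~ c) -> col u w = None ->
  safe_edge u v \/ safe_edge v w.
Proof.
move=> Huv Hvw Huw.
have [|unsafe_uv] := classic (safe_edge u v); [by left | right].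
move=> y d' Hvy Hyw; apply: unsafe_uv => x d Hux Hxv.
have [Ed Hxw] := unsafe_witness_first_edge Huv Hvw Huw Hux Hxv.
have [Ed' Hyu] : ~~ d' = ~~ c /\ col y u = None.
  by apply: (unsafe_witness_first_edge (u := w) (v := v)); colour_fact.
rewrite {d}Ed in Hux Hxv; rewrite (negb_inj Ed') in Hvy Hyw.
case Hxy: (col x y) => [e|].
  have [Ee|Ee] := eq_or_negb e c; rewrite {e}Ee in Hxy.
  - by case/negP: noLC; apply: (@LC_diamondI w y x v (~~ c)); colour_fact.
  - by case/negP: noLC; apply: (@LC_diamondI u x y v c); colour_fact.
by case/negP: noCC; apply: (@CC_hourglassI u v w x y c); colour_fact.
Qed.

End NiceGraph.

End TwoColouredGraph.

Theorem proposition1 (V : finType) (col : V -> V -> option bool) (k : nat) :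
  tcg col -> nice col ->
  forall e1 e2 : {set V}, bp3 col e1 e2 ->
  exists e : {set V}, (e = e1 \/ e = e2) /\
    nbp3 (del_edge col e) = nbp3 col - 1 /\
    nice (del_edge col e).
Proof.
move=> [col_sym col_loopfree] col_nice e1 e2 p3_12.
have [noLC [noLO [noIIZ [noCC p3_deg]]]] := col_nice.
have /existsP[u /existsP[v /existsP[w /existsP[c]]]] := p3_12.
case/and5P=> /eqP E1 /eqP E2 _ /eqP Huv /andP[/eqP Hvw /eqP Huw].
have safe_del a b : safe_edge col a b -> [set a; b] \in [set e1; e2] ->
    nbp3 (del_edge col [set a; b]) = nbp3 col - 1 /\ nice (del_edge col [set a; b]).
  move=> ab_safe ab_in; split.
    exact: (nbp3_del_safe_edge col_sym p3_deg ab_safe p3_12 ab_in).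
  exact: (nice_del_safe_edge col_sym col_loopfree ab_safe col_nice).
have [uv_safe|vw_safe] := safe_edge_of_bp3 col_sym col_loopfree noLC noLO noIIZ noCC
  p3_deg Huv Hvw Huw.
- by exists e1; rewrite E1; split; [left | apply: safe_del; rewrite // -E1 !inE eqxx].
- by exists e2; rewrite E2; split; [right | apply: safe_del; rewrite // -E2 !inE eqxx ?orbT].
Qed.
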